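(* Let $M$ be a smooth $2n$-dimensional manifold, $\pi:E\to M$ the bundle of almost-complex structures, $\theta_1=j^1_pS\in J^1\pi$, $\theta_0=S(p)$. For any two horizontal subspaces $H,\tilde H\subset\mathcal A_{\theta_1}$ one has $\omega_H-\omega_{\tilde H}\in\partial_{1,1}(g_{\theta_0}\otimes T_p^*M)$. Consequently the class $$\chi(\theta_1)=\omega_H+\partial_{1,1}(g_{\theta_0}\otimes T_p^*M)\in H^{0,2}(g_{\theta_0})$$ does not depend on the choice of the horizontal subspace $H$ of $\mathcal A_{\theta_1}$.
   Context: $\tau:TM\otimes T^*M\to M$ is the bundle of $(1,1)$-tensors, $E=\{\theta:\theta^2=-\mathrm{id}\}$, $\pi=\tau|_E$, $J^1\pi$ its $1$-jet bundle. For a vector field $X$, $X^{(0)}$ is the vector field on $TM\otimes T^*M$ generated by the natural lift of its flow (conjugation of $(1,1)$-tensors by the differential); in coordinates $X^{(0)}=X^i\partial_{x^i}+(\partial_sX^i\,u^s_j-u^i_s\,\partial_jX^s)\partial_{u^i_j}$. $\mathcal K_{\theta_1}$ is the tangent space at $\theta_0$ to the image of $S$; $\mathcal A_{\theta_1}=\{j^1_pX: X^{(0)}_{\theta_0}\in\mathcal K_{\theta_1}\}$, a subspace of the space $J^1_p\xi$ of $1$-jets at $p$ of vector fields; $\xi_{1,0}:J^1_p\xi\to T_pM$, $j^1_pX\mapsto X_p$. A $2n$-dimensional $H\subset\mathcal A_{\theta_1}$ is horizontal if $\xi_{1,0}|_H$ is an isomorphism onto $T_pM$. The bracket $[j^1_pX,j^1_pY]=[X,Y]_p$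 is a well-defined bilinear map $J^1_p\xi\times J^1_p\xi\to T_pM$, and $\omega_H\in T_pM\otimes\wedge^2T_p^*M$ is $\omega_H(X_p,Y_p)=[(\xi_{1,0}|_H)^{-1}X_p,(\xi_{1,0}|_H)^{-1}Y_p]$. $g_{\theta_0}=\{A\in\mathrm{End}(T_pM):A\theta_0=\theta_0A\}$; $\partial_{1,1}:g_{\theta_0}\otimes T_p^*M\to T_pM\otimes\wedge^2T_p^*M$, $\partial_{1,1}(h)(X,Y)=h(X)(Y)-h(Y)(X)$; $H^{0,2}(g_{\theta_0})=(T_pM\otimes\wedge^2T_p^*M)/\partial_{1,1}(g_{\theta_0}\otimes T_p^*M)$. *)

From HB Require Import structures.
From mathcomp Require Import all_boot all_order all_algebra.
From mathcomp Require Import all_classical all_reals all_analysis.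
Set Implicit Arguments. Unset Strict Implicit. Unset Printing Implicit Defensive.
Import Order.TTheory GRing.Theory Num.Theory.
Import numFieldNormedType.Exports.
Local Open Scope ring_scope.
Local Open Scope classical_set_scope.

(* Local (chart) model at p of a 2n-dimensional manifold: T_pM = 'rV[R]_(2n).
   A (1,1)-tensor / endomorphism of T_pM is a matrix acting on row vectors:
   v |-> v *m A.  A 1-jet at p of a vector field X is the pair
   (X_p, DX_p), where DX_p is the matrix of the differential of X at p
   (v |-> v *m DX_p). *)

Section Defs.
Variables (R : realType) (n : nat).

Notation vec := 'rV[R]_(2 * n).
Notation endo := 'M[R]_(2 * n).
Definition jet1 := (vec * endo)%type.

Definition xi10 (j : jet1) : vec := j.1.

(* bracket [j^1_p X, j^1_p Y] = [X,Y]_p = DY(X_p) - DX(Y_p) *)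
Definition jet_bracket (a b : jet1) : vec := a.1 *m b.2 - b.1 *m a.2.

(* vertical part of X^(0) at theta0 (row-vector convention): the natural
   lift of the flow acts by conjugation, giving theta0 DX - DX theta0 *)
Definition lift0_vert (theta0 : endo) (j : jet1) : endo :=
  theta0 *m j.2 - j.2 *m theta0.

(* K_{theta1}: tangent space at theta0 = S(p) of the image of the section S,
   i.e. {(v, dS_p v)}.  A_{theta1} = {j : X^(0)_{theta0} in K}. *)
Definition calA (S : vec -> endo) (p : vec) : set jet1 :=
  [set j | lift0_vert (S p) j = ('d S p : vec -> endo) j.1].

Definition lin_subspace (H : set jet1) : Prop :=
  H (0, 0) /\
  forall (a : R) (u v : jet1), H u -> H v -> H (a *: u.1 + v.1, a *: u.2 + v.2).

Definition horizontal (S : vec -> endo) (p : vec) (H : set jet1) : Prop :=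
  [/\ lin_subspace H, H `<=` calA S p,
      (forall x : vec, exists B : endo, H (x, B)) &
      (forall u v : jet1, H u -> H v -> xi10 u = xi10 v -> u = v)].

Definition hinv (H : set jet1) (x : vec) : jet1 :=
  (x, xget 0 (fun B : endo => H (x, B))).

Definition omegaH (H : set jet1) (x y : vec) : vec :=
  jet_bracket (hinv H x) (hinv H y).

Definition in_g (theta0 : endo) (A : endo) : Prop := A *m theta0 = theta0 *m A.

(* elements of g_{theta0} (x) T_p^*M : linear maps T_pM -> g_{theta0} *)
Definition g_tensor_Tstar (theta0 : endo) (h : vec -> endo) : Prop :=
  linear h /\ forall x, in_g theta0 (h x).

Definition del11 (h : vec -> endo) (x y : vec) : vec :=
  y *m h x - x *m h y.

Definition in_image_del11 (theta0 : endo) (w : vec -> vec -> vec) : Prop :=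
  exists h : vec -> endo, g_tensor_Tstar theta0 h /\ forall x y, w x y = del11 h x y.

(* the class chi: omega_H + image(partial_{1,1}), as a set of representatives *)
Definition chi_class (theta0 : endo) (H : set jet1) : set (vec -> vec -> vec) :=
  [set w | in_image_del11 theta0 (fun x y => w x y - omegaH H x y)].

End Defs.

From HB Require Import structures.
From mathcomp Require Import all_boot all_order all_algebra.
From mathcomp Require Import all_classical all_reals all_analysis.
Import Order.TTheory GRing.Theory Num.Theory.
Import numFieldNormedType.Exports.
Local Open Scope ring_scope.
Local Open Scope classical_set_scope.
Set Implicit Arguments. Unset Strict Implicit.

(* A horizontal subspace H is the graph of a linear map x |-> B_H x, and the
   condition H <= A says [theta0, B_H x] = dS_p x.  For two horizontal
   subspaces the difference B_Ht - B_H therefore commutes with theta0, i.e. it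
   is an element h of g_theta0 (x) T_p^*M, and bilinearity of the bracket gives
   omega_H - omega_Ht = del11 h.  Neither theta0^2 = -1 nor the smoothness of
   S plays any role.  Independence of the class follows because the image of
   del11 is closed under addition. *)

Section HorizontalLift.
Variables (R : realType) (n : nat).
Variables (S : 'rV[R]_(2 * n) -> 'M[R]_(2 * n)) (p : 'rV[R]_(2 * n)).
Variable H : set (jet1 R n).
Hypothesis hH : horizontal S p H.

Definition hlift (x : 'rV[R]_(2 * n)) : 'M[R]_(2 * n) := (hinv H x).2.

Lemma hliftP x : H (x, hlift x).
Proof.
by case: hH => _ _ ex _; apply: (xgetPex (0 : 'M[R]_(2 * n)) (ex x)).
Qed.

Lemma hlift_unique x B : H (x, B) -> B = hlift x.
Proof.
move=> HxB; case: hH => _ _ _ inj.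
by case: (inj _ _ HxB (hliftP x) erefl).
Qed.

Lemma hlift_is_linear : linear hlift.
Proof.
move=> a x y; case: hH => [[_ closedH]] _ _ _.
exact/esym/hlift_unique/(closedH a _ _ (hliftP x) (hliftP y)).
Qed.

Lemma hlift_vert x : lift0_vert (S p) (x, hlift x) = ('d S p : _ -> _) x.
Proof. by case: hH => _ subA _ _; apply: subA (hliftP x). Qed.

End HorizontalLift.

Lemma jet_bracketB (R : realType) (n : nat)
    (f f' : 'rV[R]_(2 * n) -> 'M[R]_(2 * n)) x y :
  jet_bracket (x, f x) (y, f y) - jet_bracket (x, f' x) (y, f' y) =
  del11 (fun z => f' z - f z) x y.
Proof.
rewrite /jet_bracket /del11 /= !mulmxBr !opprB.
by rewrite addrACA [RHS]addrACA (addrC (x *m f y)).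
Qed.

Lemma in_g_lift0_vertB (R : realType) (n : nat)
    (x : 'rV[R]_(2 * n)) (theta0 A B : 'M[R]_(2 * n)) :
  lift0_vert theta0 (x, A) = lift0_vert theta0 (x, B) -> in_g theta0 (B - A).
Proof.
rewrite /lift0_vert /in_g /= mulmxBl mulmxBr => eAB.
by rewrite -[theta0 *m B](subrK (B *m theta0)) -eAB addrAC (addrAC (theta0 *m A))
   subrr add0r addrC.
Qed.

Lemma in_image_del11D (R : realType) (n : nat) (theta0 : 'M[R]_(2 * n)) w1 w2 :
  in_image_del11 theta0 w1 -> in_image_del11 theta0 w2 ->
  in_image_del11 theta0 (fun x y => w1 x y + w2 x y).
Proof.
move=> [h1 [[lin1 g1] e1]] [h2 [[lin2 g2] e2]].
exists (fun x => h1 x + h2 x); split; first split.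
- by move=> a x y; rewrite lin1 lin2 scalerDr addrACA.
- by move=> x; rewrite /in_g mulmxDl mulmxDr g1 g2.
- by move=> x y; rewrite e1 e2 /del11 !mulmxDr opprD addrACA.
Qed.

Lemma in_image_del11_omegaHB (R : realType) (n : nat) S p (H Ht : set (jet1 R n)) :
  horizontal S p H -> horizontal S p Ht ->
  in_image_del11 (S p) (fun x y => omegaH H x y - omegaH Ht x y).
Proof.
move=> hH hHt; exists (fun x => hlift Ht x - hlift H x); split; first split.
- move=> a x y /=; rewrite (hlift_is_linear hH) (hlift_is_linear hHt).
  by rewrite scalerBr addrACA opprD.
- move=> x /=; apply: (@in_g_lift0_vertB _ _ x).
  by rewrite (hlift_vert hH) (hlift_vert hHt).
- by move=> x y; apply: (jet_bracketB (hlift H) (hlift Ht)).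
Qed.

Lemma chi_class_sub (R : realType) (n : nat) S p (H Ht : set (jet1 R n)) :
  horizontal S p H -> horizontal S p Ht -> chi_class (S p) H `<=` chi_class (S p) Ht.
Proof.
move=> hH hHt w hw; have := in_image_del11D hw (in_image_del11_omegaHB hH hHt).
rewrite /chi_class /=.
suff -> : (fun x y => w x y - omegaH H x y + (omegaH H x y - omegaH Ht x y)) =
          (fun x y => w x y - omegaH Ht x y) by [].
by apply/funext => x; apply/funext => y; rewrite addrA subrK.
Qed.

Theorem mainTheorem5 (R : realType) (n : nat)
  (S : 'rV[R]_(2 * n) -> 'M[R]_(2 * n)) (p : 'rV[R]_(2 * n))
  (hS : forall x, S x *m S x = - 1%:M)
  (hdiff : differentiable S p)
  (H Ht : set (jet1 R n)) :
  horizontal S p H -> horizontal S p Ht ->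
  in_image_del11 (S p) (fun x y => omegaH H x y - omegaH Ht x y) /\
  chi_class (S p) H = chi_class (S p) Ht.
Proof.
move=> hH hHt; split; first exact: in_image_del11_omegaHB.
by apply/seteqP; split; apply: chi_class_sub.
Qed.
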